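(* (1) Let $\mathcal K$ be a class of algebras of the same type $F$. Then $\mathsf V(\mathsf D(\mathcal K))\subseteq\mathsf V(\mathcal K)_\tau$. (2) Let $\mathcal V$ be any variety of algebras of type $F$. Then $\mathcal V_\tau=\mathsf{ISD}(\mathcal V)$.
   Context: A state-morphism on an algebra $\mathbf A$ of type $F$ is an endomorphism $\tau$ of $\mathbf A$ with $\tau\circ\tau=\tau$; $(\mathbf A,\tau)$ is a state-morphism algebra, an algebra of type $F$ extended by one unary operation. For a variety $\mathcal V$ of type $F$, $\mathcal V_\tau$ is the class (a variety) of all state-morphism algebras $(\mathbf A,\tau)$ with $\mathbf A\in\mathcal V$. For an algebra $\mathbf B$ of type $F$, $D(\mathbf B)=(\mathbf B\times\mathbf B,\tau_B)$ with $\tau_B(x,y)=(x,x)$, and $\mathsf D(\mathcal K)=\{D(\mathbf B):\mathbf B\in\mathcal K\}$. $\mathsf I,\mathsf S,\mathsf V$ denote closure under isomorphic images, subalgebras, and the generated variety, respectively. *)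

From mathcomp Require Import all_boot.
Set Implicit Arguments. Unset Strict Implicit. Unset Printing Implicit Defensive.

Record signature := Signature { op_sym : Type; arity : op_sym -> nat }.

Record algebra (F : signature) := Algebra {
  carrier :> Type;
  interp : forall f : op_sym F, ('I_(arity f) -> carrier) -> carrier }.

Definition class (F : signature) := algebra F -> Prop.

Definition is_hom (F : signature) (A B : algebra F) (h : A -> B) : Prop :=
  forall (f : op_sym F) (args : 'I_(arity f) -> A),
    h (@interp _ A f args) = @interp _ B f (fun i => h (args i)).

Definition Hop F (K : class F) : class F := fun B =>
  exists A, K A /\ exists h : A -> B, is_hom h /\ (forall y, exists x, h x = y).

Definition subuniverse F (A : algebra F) (P : A -> Prop) : Prop :=
  forall f (args : 'I_(arity f) -> A), (forall i, P (args i)) -> P (@interp _ A f args).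

Definition subalgebra F (A : algebra F) (P : A -> Prop) (HP : subuniverse P)
  : algebra F :=
  @Algebra F {x : A | P x}
    (fun f args => exist P (@interp _ A f (fun i => proj1_sig (args i)))
                         (HP f _ (fun i => proj2_sig (args i)))).

Definition Sop F (K : class F) : class F := fun B =>
  exists A, K A /\ exists (P : A -> Prop) (HP : subuniverse P), B = subalgebra HP.

Definition Iop F (K : class F) : class F := fun B =>
  exists A, K A /\ exists h : A -> B, is_hom h /\ bijective h.

Definition prod_alg F (I : Type) (A : I -> algebra F) : algebra F :=
  @Algebra F (forall i, A i) (fun f args => fun i => @interp _ (A i) f (fun j => args j i)).

Definition Pop F (K : class F) : class F := fun B =>
  exists (I : Type) (A : I -> algebra F), (forall i, K (A i)) /\ B = prod_alg A.

Definition subclass F (K L : class F) : Prop := forall A, K A -> L A.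

Definition variety F (V : class F) : Prop :=
  subclass (Hop V) V /\ subclass (Sop V) V /\ subclass (Pop V) V.

Definition Vgen F (K : class F) : class F := fun B =>
  forall W : class F, variety W -> subclass K W -> W B.

Definition ext_sig (F : signature) : signature :=
  @Signature (option (op_sym F))
    (fun o => match o with Some f => arity f | None => 1 end).

Definition reduct F (A : algebra (ext_sig F)) : algebra F :=
  @Algebra F (carrier A) (fun f args => @interp _ A (Some f) args).

Definition unop F (A : algebra (ext_sig F)) (x : A) : A :=
  @interp _ A None (fun _ => x).

Definition state_morphism F (A : algebra F) (tau : A -> A) : Prop :=
  is_hom tau /\ (forall x, tau (tau x) = tau x).

Definition Vtau F (V : class F) : class (ext_sig F) := fun A =>
  V (reduct A) /\ state_morphism (@unop F A).

Definition Dalg F (B : algebra F) : algebra (ext_sig F) :=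
  @Algebra (ext_sig F) (B * B)%type
    (fun o => match o return ('I_(arity (s := ext_sig F) o) -> (B * B)%type) -> (B * B)%type with
     | Some f => fun args => (@interp _ B f (fun i => (args i).1),
                              @interp _ B f (fun i => (args i).2))
     | None => fun args => ((args ord0).1, (args ord0).1)
     end).

Definition Dop F (K : class F) : class (ext_sig F) := fun C =>
  exists B, K B /\ C = Dalg B.

Definition class_eq F (K L : class F) : Prop := forall A, K A <-> L A.

From mathcomp Require Import all_boot.
From Stdlib Require Import FunctionalExtensionality ProofIrrelevance IndefiniteDescription.
Set Implicit Arguments. Unset Strict Implicit. Unset Printing Implicit Defensive.

(* (1): V(K)_tau is a variety (V_tau is closed under H, S, P whenever V is) and
   contains D(B) for every B in K, since B x B lies in V(K) and tau_B is an
   idempotent endomorphism; so it contains V(D(K)).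
   (2): every (A, tau) in V_tau is isomorphic to the subalgebra
   {(tau a, a) | a in A} of D(A), and conversely V_tau is closed under S and I
   and contains D(V). *)

Lemma sval_inj (T : Type) (P : T -> Prop) : injective (@proj1_sig T P).
Proof. exact: eq_sig_hprop (fun _ => proof_irrelevance _). Qed.

Lemma Iop_Hop F (K : class F) : subclass (Iop K) (Hop K).
Proof.
move=> B [A [KA [h [hh [g _ hg]]]]].
by exists A; split=> //; exists h; split=> // y; exists (g y); apply: hg.
Qed.

Section ExtendedSignature.

Variable F : signature.
Implicit Types A B : algebra (ext_sig F).

Lemma unop_is_hom A :
  (forall (f : op_sym F) (args : 'I_(arity f) -> A),
     unop (@interp _ A (Some f) args) = @interp _ A (Some f) (fun i => unop (args i))) ->
  is_hom (@unop F A).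
Proof.
move=> unopM [f|] args; first exact: unopM.
have -> : args = fun _ => args ord0.
  by apply: functional_extensionality => i; rewrite (ord1 i).
by [].
Qed.

Lemma hom_unop A B (h : A -> B) : is_hom h -> forall x, unop (h x) = h (unop x).
Proof. by move=> hh x; rewrite /unop (hh None). Qed.

Lemma hom_reduct A B (h : A -> B) :
  is_hom h -> is_hom (A := reduct A) (B := reduct B) h.
Proof. by move=> hh f; apply: (hh (Some f)). Qed.

(* Transparent, so that [reduct (subalgebra HP)] is convertible to
   [subalgebra (subuniverse_reduct HP)]. *)
Definition subuniverse_reduct A (P : A -> Prop) (HP : subuniverse P) :
  subuniverse (A := reduct A) P := fun f => HP (Some f).

Lemma state_morphism_hom_image A B (h : A -> B) :
  is_hom h -> (forall y, exists x, h x = y) ->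
  state_morphism (@unop F A) -> state_morphism (@unop F B).
Proof.
move=> hh hsurj [unopM unopK].
pose g y := proj1_sig (constructive_indefinite_description _ (hsurj y)).
have gK : cancel g h.
  by move=> y; rewrite /g; case: constructive_indefinite_description.
split.
  apply: unop_is_hom => f args.
  have -> : args = fun i => h (g (args i)).
    by apply: functional_extensionality => i; rewrite gK.
  rewrite -(hh (Some f)) (hom_unop hh) (unopM (Some f)) (hh (Some f)).
  congr (@interp _ B (Some f)).
  by apply: functional_extensionality => i; rewrite (hom_unop hh).
by move=> y; rewrite -(gK y) !(hom_unop hh) unopK.
Qed.

Lemma state_morphism_subalgebra A (P : A -> Prop) (HP : subuniverse P) :
  state_morphism (@unop F A) -> state_morphism (@unop F (subalgebra HP)).
Proof.
case=> unopM unopK; split; last by move=> x; apply: sval_inj; apply: unopK.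
by apply: unop_is_hom => f args; apply: sval_inj; apply: (unopM (Some f)).
Qed.

Lemma state_morphism_prod (I : Type) (A : I -> algebra (ext_sig F)) :
  (forall i, state_morphism (@unop F (A i))) ->
  state_morphism (@unop F (prod_alg A)).
Proof.
move=> smA; split.
  apply: unop_is_hom => f args; apply: functional_extensionality_dep => i.
  by case: (smA i) => unopM _; apply: (unopM (Some f)).
by move=> x; apply: functional_extensionality_dep => i; case: (smA i) => _; apply.
Qed.

Lemma state_morphism_Dalg (B : algebra F) : state_morphism (@unop F (Dalg B)).
Proof. by split=> //; apply: unop_is_hom. Qed.

Section Vtau.

Variable V : class F.
Hypothesis varV : variety V.

Lemma Vtau_variety : variety (Vtau V).
Proof.
have [VH [VS VP]] := varV; split; [|split].
- move=> B [A [[VA smA] [h [hh hsurj]]]]; split.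
    by apply: VH; exists (reduct A); split=> //; exists h; split=> //; apply: hom_reduct.
  exact: state_morphism_hom_image hh hsurj smA.
- move=> B [A [[VA smA] [P [HP ->]]]]; split.
    by apply: VS; exists (reduct A); split=> //; exists P, (subuniverse_reduct HP).
  exact: state_morphism_subalgebra.
- move=> B [I [A [VtA ->]]]; split.
    by apply: VP; exists I, (fun i => reduct (A i)); split=> // i; case: (VtA i).
  by apply: state_morphism_prod => i; case: (VtA i).
Qed.

(* B x B is the image of the product B^bool under p |-> (p true, p false). *)
Lemma Dop_Vtau : subclass (Dop V) (Vtau V).
Proof.
have [VH [_ VP]] := varV.
move=> C [B [VB ->]]; split; last exact: state_morphism_Dalg.
apply: VH; exists (prod_alg (fun _ : bool => B)); split.
  by apply: VP; exists bool, (fun _ => B).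
exists (fun p => (p true, p false)); split=> // [[x y]].
by exists (fun b : bool => if b then x else y).
Qed.

End Vtau.

Definition unop_graph A (p : Dalg (reduct A)) : Prop := p.1 = unop p.2.

Section UnopGraph.

Variable A : algebra (ext_sig F).
Hypothesis smA : state_morphism (@unop F A).

Lemma unop_graph_subuniverse : subuniverse (@unop_graph A).
Proof.
have [unopM unopK] := smA.
case=> [f|] args graph_args; rewrite /unop_graph /=.
  rewrite (unopM (Some f)); congr (@interp _ A (Some f)).
  by apply: functional_extensionality => i; move: (graph_args i); case: (args i).
move: (graph_args ord0); rewrite /unop_graph.
by case: (args ord0) => a b /= ->; rewrite unopK.
Qed.

Lemma unop_graph_iso :
  exists h : subalgebra unop_graph_subuniverse -> A, is_hom h /\ bijective h.
Proof.
exists (fun c => (proj1_sig c).2); split.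
  case=> [f|] args //=.
  have -> : args = fun _ => args ord0.
    by apply: functional_extensionality => i; rewrite (ord1 i).
  by case: (args ord0) => [[a b]]; rewrite /unop_graph /= => ->.
exists (fun x => exist (@unop_graph A) (unop x, x) erefl) => //.
case=> [[a b]]; rewrite /unop_graph /= => graph_ab.
by apply: sval_inj; rewrite /= graph_ab.
Qed.

End UnopGraph.

End ExtendedSignature.

Lemma Vgen_variety F (K : class F) : variety (Vgen K).
Proof.
split; [|split].
- move=> B [A [VA [h hsurj]]] W varW KW.
  by apply: varW.1; exists A; split; [apply: VA | exists h].
- move=> B [A [VA [P [HP ->]]]] W varW KW.
  by apply: varW.2.1; exists A; split; [apply: VA | exists P, HP].
- move=> B [I [A [VA ->]]] W varW KW.
  by apply: varW.2.2; exists I, A; split=> // i; apply: VA.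
Qed.

Lemma Vgen_sub F (K : class F) : subclass K (Vgen K).
Proof. by move=> A KA W _; apply. Qed.

Theorem lemma4p1 :
  (forall (F : signature) (K : class F),
      subclass (Vgen (Dop K)) (Vtau (Vgen K))) /\
  (forall (F : signature) (V : class F),
      variety V -> class_eq (Vtau V) (Iop (Sop (Dop V)))).
Proof.
split.
  move=> F K A VDA; apply: VDA; first exact/Vtau_variety/Vgen_variety.
  move=> C [B [KB ->]]; apply: (Dop_Vtau (Vgen_variety K)).
  by exists B; split=> //; apply: Vgen_sub.
move=> F V varV A; split.
- case=> VA smA.
  exists (subalgebra (unop_graph_subuniverse smA)); split; last exact: unop_graph_iso.
  exists (Dalg (reduct A)); split; first by exists (reduct A).
  by exists (@unop_graph F A), (unop_graph_subuniverse smA).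
- move=> [_ [[D [DD [P [HP ->]]]] iso]].
  have [VtH [VtS _]] := Vtau_variety varV.
  apply/VtH/Iop_Hop; exists (subalgebra HP); split=> //.
  by apply: VtS; exists D; split; [exact: Dop_Vtau | exists P, HP].
Qed.
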